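(* Let $G$ be a finite directed graph. If $R\subseteq V(G)$ is nonempty and $\mathrm{DT}_R(G)$ has more than one maximal face, then there is an edge $(x\rightarrow y)\in E(G)$ which is nice in $\mathrm{DT}_R(G)$.
   Context: A directed forest in $G$ is a set of edges of $G$ which, viewed as a graph on $V(G)$, is acyclic and has at most one edge directed to each vertex; its roots are the vertices with no forest edge directed to them. $\mathrm{DT}(G)$ is the simplicial complex with vertex set $E(G)$ whose simplices are the directed forests; $\mathrm{DT}_R(G)$ is the subcomplex generated by the directed forests with root set exactly $R$. An edge $(x\rightarrow y)$ of $G$ is nice in a subcomplex $\Delta$ of $\mathrm{DT}(G)$ if (i) there is an edge $(z\rightarrow y)$ in $\Delta$ with $z\ne x$, and (ii) every forest $F\in\Delta$ without an edge directed to $y$ satisfies $F\cup\{(x\rightarrow y)\}\in\Delta$. *)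

From mathcomp Require Import all_boot.
Set Implicit Arguments. Unset Strict Implicit. Unset Printing Implicit Defensive.

(* A finite directed graph G: vertex type V : finType (V(G)), edge set
   E : {set V * V} (E(G)); the pair (x, y) is the directed edge x -> y.
   Sets of edges are F : {set V * V}. *)

Section DT.
Variable V : finType.

Definition joins (e : V * V) (a b : V) : bool :=
  (e == (a, b)) || (e == (b, a)).

(* F contains a cycle of the underlying (undirected multi)graph on V:
   a closed trail v_0, e_0, v_1, ..., v_{k-1}, e_{k-1}, v_0 with k >= 1,
   pairwise distinct vertices v_i and pairwise distinct edges e_i in F,
   where e_i joins v_i and v_{(i+1) mod k}. *)
Definition has_cycle (F : {set V * V}) : Prop :=
  exists (v0 : V) (vs : seq V) (es : seq (V * V)),
    [/\ size es = size vs, 0 < size vs, uniq vs, uniq es &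
      forall i, i < size vs ->
        let e := nth (v0, v0) es i in
        (e \in F) && joins e (nth v0 vs i) (nth v0 vs (i.+1 %% size vs))].

Definition acyclic (F : {set V * V}) : Prop := ~ has_cycle F.

Definition indeg_le1 (F : {set V * V}) : Prop :=
  forall y : V, #|[set e in F | e.2 == y]| <= 1.

Definition directed_forest (E F : {set V * V}) : Prop :=
  [/\ F \subset E, acyclic F & indeg_le1 F].

Definition roots (F : {set V * V}) : {set V} :=
  [set v | [forall e in F, e.2 != v]].

(* A subcomplex of DT(G) is represented by its set of faces (a predicate on
   edge sets). *)
Definition complex := {set V * V} -> Prop.

Definition DT (E : {set V * V}) : complex := fun F => directed_forest E F.

(* DT_R(G): subcomplex generated by the directed forests with root set
   exactly R, i.e. faces are subsets of such forests. *)
Definition DT_R (E : {set V * V}) (R : {set V}) : complex :=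
  fun F => exists F', [/\ directed_forest E F', roots F' = R & F \subset F'].

Definition maximal_face (D : complex) (F : {set V * V}) : Prop :=
  D F /\ forall F', D F' -> F \subset F' -> F' = F.

Definition has_several_maximal_faces (D : complex) : Prop :=
  exists F1 F2, [/\ maximal_face D F1, maximal_face D F2 & F1 != F2].

Definition nice (D : complex) (x y : V) : Prop :=
  (exists z, z != x /\ D [set (z, y)]) /\
  (forall F, D F -> [forall e in F, e.2 != y] -> D (F :|: [set (x, y)])).

End DT.

From mathcomp Require Import all_boot zify.
From Stdlib Require Import Classical.

Set Implicit Arguments. Unset Strict Implicit. Unset Printing Implicit Defensive.

(* A maximal face of DT_R(G) is a forest with root set exactly R, that is, an
   acyclic choice of a parent for every vertex outside R.  Fix one such forest
   F and call a vertex settled when every such forest gives it the same path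
   to its root as F.  Roots are settled and F-parents of settled vertices are
   settled; as there is a second maximal face, some vertex is unsettled, and
   walking up F from it we meet an unsettled y whose F-parent x is settled.
   The edge x -> y is nice: some forest gives y a parent other than x
   (otherwise y would be settled), and in any forest T, redirecting the edge
   into y to come from x keeps a forest with the same roots, because the
   T-path from x is its F-path, which avoids y. *)

Lemma orbit_periodic_point (T : finType) (f : T -> T) x :
  exists i, fcycle f (orbit f (iter i f x)).
Proof.
have /trajectP [i lt_i_ord iter_order_eq] := looping_order f x.
exists i; apply/(orbitPcycle 3 0); exists (order f x - i).-1.
by rewrite prednK ?subn_gt0 // -iterD subnK 1?ltnW.
Qed.

Section ParentMap.
Variable V : finType.
Implicit Types S : {set V * V}.

Definition parent S (v : V) : V :=
  if [pick e in S | e.2 == v] is Some e then e.1 else v.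

Lemma rootsP S v : reflect (forall e, e \in S -> e.2 != v) (v \in roots S).
Proof. by rewrite inE; apply: (iffP forall_inP). Qed.

Lemma parent_edge S v : v \notin roots S -> (parent S v, v) \in S.
Proof.
rewrite /parent; case: pickP => [[u w] /andP [uwS /eqP /= <- //] | noedge].
by case/negP; apply/rootsP => e eS; have := noedge e; rewrite eS => /negbT.
Qed.

Lemma parent_root S v : v \in roots S -> parent S v = v.
Proof.
move/rootsP => no_edge; rewrite /parent; case: pickP => [e /andP [eS ev] | //].
by have := no_edge e eS; rewrite ev.
Qed.

Lemma parentE S u v : indeg_le1 S -> (u, v) \in S -> parent S v = u.
Proof.
move=> S_indeg uvS; rewrite /parent; case: pickP => [e /andP [eS /eqP ev] | ].
  suff -> : e = (u, v) by [].
  by apply: (card_le1_eqP (S_indeg v)); rewrite inE ?eS ?uvS ?ev /=.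
by move/(_ (u, v)); rewrite uvS eqxx.
Qed.

Lemma parent_nonroot_cycle S w :
    fcycle (parent S) (orbit (parent S) w) ->
    {in orbit (parent S) w, forall u, u \notin roots S} -> has_cycle S.
Proof.
set f := parent S => w_cycle nonroot.
exists w, (orbit f w), [seq (f u, u) | u <- orbit f w]; split.
- by rewrite size_map.
- by rewrite size_orbit order_gt0.
- exact: orbit_uniq.
- by rewrite map_inj_uniq ?orbit_uniq // => a b [_ ->].
rewrite size_orbit => i lt_i_ord /=.
have u_orbit : nth w (orbit f w) i \in orbit f w by rewrite mem_nth ?size_orbit.
have next_u : nth w (orbit f w) (i.+1 %% order f w) = f (nth w (orbit f w) i).
  rewrite !nth_traject ?ltn_pmod ?order_gt0 //.
  have [lt_i1_ord | ge_i1_ord] := ltnP i.+1 (order f w).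
    by rewrite modn_small.
  have eq_i1_ord : i.+1 = order f w by lia.
  rewrite {1}eq_i1_ord modnn -iterS eq_i1_ord.
  by apply/esym/(orbitPcycle 0 4).
rewrite (nth_map w) ?size_orbit // next_u /joins eqxx orbT andbT.
exact/parent_edge/nonroot.
Qed.

Definition reaches_root S v := exists n, iter n (parent S) v \in roots S.

Lemma reaches_root_parent S v : reaches_root S (parent S v) -> reaches_root S v.
Proof. by case=> n root_n; exists n.+1; rewrite iterSr. Qed.

Lemma acyclic_reaches_root S v : acyclic S -> reaches_root S v.
Proof.
move=> S_acyclic; apply: NNPP => no_root.
have [i w_cycle] := orbit_periodic_point (parent S) v.
apply/S_acyclic/(parent_nonroot_cycle w_cycle) => _ /trajectP [j _ ->].
by apply/negP => root_j; apply: no_root; exists (j + i); rewrite iterD.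
Qed.

Lemma acyclic_of_potential S (h : V -> nat) :
  indeg_le1 S -> (forall u v, (u, v) \in S -> h u < h v) -> acyclic S.
Proof.
move=> S_indeg h_incr [v0 [vs [es [size_es k_gt0 _ es_uniq cyc]]]].
set k := size vs in k_gt0 cyc.
pose u j := nth v0 vs j; pose e j := nth (v0, v0) es j.
(* At a vertex of maximal potential both cycle edges point inwards. *)
case: (@arg_maxnP _ (Ordinal k_gt0) xpredT (fun j => h (u j)) isT).
move=> [i lt_ik] _ max_i.
have edge_into_max a f : f \in S -> joins f (u i) a -> h a <= h (u i) -> f = (a, u i).
  move=> fS /orP [/eqP f_out | /eqP //] le_a.
  by move: fS; rewrite f_out => /h_incr; rewrite ltnNge le_a.
pose j := (i + k.-1) %% k.
have lt_jk : j < k by rewrite ltn_pmod.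
have j_pred : j.+1 %% k = i.
  by rewrite /j -addn1 modnDml -addnA addn1 prednK // modnDr modn_small.
have /andP [ei_S ei_joins] := cyc i lt_ik.
have /andP [ej_S ej_joins] := cyc j lt_jk; rewrite j_pred in ej_joins.
have ei_into : e i = (u (i.+1 %% k), u i).
  apply: edge_into_max => //.
  by apply: (max_i (Ordinal (ltn_pmod i.+1 k_gt0))).
have ej_into : e j = (u j, u i).
  apply: edge_into_max => //; first by move: ej_joins; rewrite /joins orbC.
  by apply: (max_i (Ordinal lt_jk)).
have /eqP eq_ij : i == j.
  rewrite -(nth_uniq (v0, v0) _ _ es_uniq) ?size_es //.
  apply/eqP/(card_le1_eqP (S_indeg (u i)));
    by rewrite !inE -/(e i) -/(e j) ?ei_S ?ej_S ?ei_into ?ej_into /=.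
by move: ej_S; rewrite -/(e j) ej_into -eq_ij => /h_incr; rewrite ltnn.
Qed.

Lemma acyclic_of_reaches_root S :
  indeg_le1 S -> (forall v, reaches_root S v) -> acyclic S.
Proof.
move=> S_indeg reach.
apply: (acyclic_of_potential (h := fun v => ex_minn (reach v))) => //.
move=> u v uvS; case: ex_minnP => a _ min_a; case: ex_minnP => [[|b] root_b _].
  by move/rootsP: root_b => /(_ _ uvS); rewrite eqxx.
by apply: min_a; rewrite -(parentE S_indeg uvS) -iterSr.
Qed.

Lemma eq_forest_parent S1 S2 :
    roots S1 = roots S2 -> indeg_le1 S1 -> indeg_le1 S2 ->
  parent S1 =1 parent S2 -> S1 = S2.
Proof.
have sub T1 T2 : roots T1 = roots T2 -> indeg_le1 T1 ->
    parent T1 =1 parent T2 -> T1 \subset T2.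
  move=> eq_roots T1_indeg eq_parent; apply/subsetP => -[u v] uvT1.
  have v_nonroot : v \notin roots T2.
    by rewrite -eq_roots; apply/rootsP => /(_ _ uvT1); rewrite eqxx.
  by have := parent_edge v_nonroot; rewrite -eq_parent (parentE T1_indeg uvT1).
move=> eq_roots S1_indeg S2_indeg eq_parent; apply/eqP; rewrite eqEsubset.
by rewrite !sub // => v; rewrite eq_parent.
Qed.

Definition reparent S x y := [set e in S | e.2 != y] :|: [set (x, y)].

Section Reparent.
Variables (S : {set V * V}) (x y : V).
Hypotheses (S_indeg : indeg_le1 S) (y_nonroot : y \notin roots S).

Lemma indeg_le1_reparent : indeg_le1 (reparent S x y).
Proof.
move=> v; have [-> | v_ne_y] := eqVneq v y.
  rewrite -(cards1 (x, y)); apply/subset_leq_card/subsetP => e.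
  by rewrite !inE => /andP [/orP [/andP [_ /negPf ->] | ->]].
apply: leq_trans (S_indeg v); apply/subset_leq_card/subsetP => e.
rewrite !inE => /andP [/orP [/andP [-> _] | /eqP -> /=] // /eqP eq_yv].
by rewrite eq_yv eqxx in v_ne_y.
Qed.

Lemma roots_reparent : roots (reparent S x y) = roots S.
Proof.
apply/setP => v; apply/rootsP/rootsP => no_edge e eS.
  have [-> | e2_ne_y] := eqVneq e.2 y.
    by apply: (no_edge (x, y)); rewrite !inE !eqxx orbT.
  by apply: no_edge; rewrite !inE eS e2_ne_y.
move: eS; rewrite !inE => /orP [/andP [eS _] | /eqP -> /=]; first exact: no_edge.
by apply: contraNneq y_nonroot => ->; apply/rootsP.
Qed.

Lemma parent_reparent v :
  parent (reparent S x y) v = if v == y then x else parent S v.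
Proof.
have [-> | v_ne_y] := eqVneq v y.
  by apply: parentE indeg_le1_reparent _; rewrite !inE !eqxx orbT.
have [v_root | v_nonroot] := boolP (v \in roots S).
  by rewrite !parent_root ?roots_reparent.
by apply: parentE indeg_le1_reparent _; rewrite !inE parent_edge ?v_ne_y.
Qed.

Lemma acyclic_reparent :
  acyclic S -> (forall n, iter n (parent S) x != y) -> acyclic (reparent S x y).
Proof.
move=> S_acyclic x_not_below_y.
have reach_x : reaches_root (reparent S x y) x.
  have [n root_n] := acyclic_reaches_root x S_acyclic; exists n.
  suff -> : iter n (parent (reparent S x y)) x = iter n (parent S) x.
    by rewrite roots_reparent.
  by elim: n {root_n} => //= n ->; rewrite parent_reparent (negPf (x_not_below_y n)).
apply: acyclic_of_reaches_root; first exact: indeg_le1_reparent.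
move=> v; have [n] := acyclic_reaches_root v S_acyclic.
elim: n v => [|n IH] v root_n; first by exists 0; rewrite roots_reparent.
apply: reaches_root_parent; rewrite parent_reparent.
by case: eqVneq => [// | _]; apply: IH; rewrite -iterSr.
Qed.

End Reparent.

End ParentMap.

Section NiceEdge.
Variables (V : finType) (E : {set V * V}) (R : {set V}).

Definition rooted_forest T := directed_forest E T /\ roots T = R.

Lemma maximal_face_rooted_forest F : maximal_face (DT_R E R) F -> rooted_forest F.
Proof.
case=> -[T [T_forest T_roots F_sub_T]] F_max.
by rewrite -(F_max T) //; exists T.
Qed.

Variable F : {set V * V}.
Hypothesis F_forest : rooted_forest F.

Definition settled w :=
  forall T, rooted_forest T -> forall n, iter n (parent T) w = iter n (parent F) w.

Lemma settled_root r : r \in R -> settled r.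
Proof.
move=> r_in_R T [_ T_roots] n.
by rewrite !iter_fix // parent_root ?T_roots ?F_forest.2.
Qed.

Lemma settled_parent w : settled w -> settled (parent F w).
Proof.
move=> w_settled T T_forest n; have /= parent_eq := w_settled T T_forest 1.
by rewrite -{1}parent_eq -iterSr w_settled // iterSr.
Qed.

Lemma settled_iter n w : settled w -> settled (iter n (parent F) w).
Proof. by elim: n w => //= n IH w /IH /settled_parent. Qed.

Lemma parent_edge_unsettled y : ~ settled y -> (parent F y, y) \in F.
Proof.
move=> y_unsettled; apply: parent_edge; rewrite F_forest.2.
by apply/negP => /settled_root.
Qed.

Lemma rooted_forest_settled_eq T :
  rooted_forest T -> (forall w, settled w) -> T = F.
Proof.
move=> T_forest all_settled.
case: F_forest (T_forest) => -[_ _ F_indeg] F_roots [[_ _ T_indeg] T_roots].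
apply: eq_forest_parent => //; first by rewrite T_roots F_roots.
by move=> v; apply: (all_settled v T T_forest 1).
Qed.

Lemma unsettled_child_of_settled w :
  ~ settled w -> exists2 y, ~ settled y & settled (parent F y).
Proof.
case: F_forest => -[_ F_acyclic _] F_roots.
have [n] := acyclic_reaches_root w F_acyclic.
elim: n w => [|n IH] w; first by rewrite F_roots => /settled_root.
rewrite iterSr => root_n w_unsettled.
have [parent_settled | parent_unsettled] := classic (settled (parent F w)).
  by exists w.
exact: IH root_n parent_unsettled.
Qed.

Lemma nice_unsettled_child y :
  ~ settled y -> settled (parent F y) -> nice (DT_R E R) (parent F y) y.
Proof.
case: (F_forest) => -[F_sub_E _ _] _ y_unsettled x_settled; set x := parent F y.
have y_notin_R : y \notin R by apply/negP => /settled_root.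
split.
  apply: NNPP => no_other_parent; apply: y_unsettled => T T_forest [|n] //.
  have parent_T_y : parent T y = x.
    apply: NNPP => /eqP ne_x; apply: no_other_parent; exists (parent T y).
    split => //; exists T; case: T_forest => T_dforest T_roots; split => //.
    by rewrite sub1set parent_edge ?T_roots.
  by rewrite !iterSr parent_T_y x_settled.
move=> F' [T [T_dforest T_roots F'_sub_T]] no_edge_y.
have T_forest : rooted_forest T by [].
case: T_dforest => T_sub_E T_acyclic T_indeg.
have y_nonroot : y \notin roots T by rewrite T_roots.
have x_not_below_y n : iter n (parent T) x != y.
  apply: contra_notN y_unsettled => /eqP <-.
  by rewrite (x_settled T T_forest n); apply: settled_iter.
exists (reparent T x y); split.
- split; [ | exact: acyclic_reparent | exact: indeg_le1_reparent].
  apply/subsetP => e; rewrite !inE => /orP [/andP [eT _] | /eqP ->].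
    exact: (subsetP T_sub_E).
  exact/(subsetP F_sub_E)/parent_edge_unsettled.
- by rewrite roots_reparent.
apply/subsetP => e; rewrite !inE => /orP [eF' | ->]; last by rewrite orbT.
by rewrite (subsetP F'_sub_T e eF') (forall_inP no_edge_y e eF').
Qed.

End NiceEdge.

Theorem lemma2p6 (V : finType) (E : {set V * V}) (R : {set V}) :
  R != set0 ->
  has_several_maximal_faces (DT_R E R) ->
  exists x y : V, (x, y) \in E /\ nice (DT_R E R) x y.
Proof.
move=> _ [F1 [F2 [/maximal_face_rooted_forest F1_forest
                 /maximal_face_rooted_forest F2_forest F1_ne_F2]]].
have [w w_unsettled] : exists w, ~ settled E R F1 w.
  apply: NNPP => all_settled; move/eqP: F1_ne_F2; apply.
  apply/esym/(rooted_forest_settled_eq F1_forest F2_forest) => w.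
  by apply: NNPP => w_unsettled; apply: all_settled; exists w.
have [y y_unsettled x_settled] := unsettled_child_of_settled F1_forest w_unsettled.
exists (parent F1 y), y; split; last exact: nice_unsettled_child.
case: (F1_forest) => -[F1_sub_E _ _] _.
exact: (subsetP F1_sub_E _ (parent_edge_unsettled F1_forest y_unsettled)).
Qed.
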